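(* (Perfect soundness.) Consider the card-based Makaro protocol described in the context. If the prover $P$ does not know a solution of the Makaro puzzle (so that the numbers encoded by the cell cards $P$ places violate at least one of the room, neighbor or arrow conditions), then the verifier $V$ always rejects.
   Context: Makaro puzzle: a rectangular grid of white and black cells. The white cells are partitioned into polyominoes called rooms; the size of a room is its number of cells. Some white cells already contain a number. Each black cell contains an arrow pointing to one of its (horizontally or vertically) adjacent white cells. A solution assigns a number to every empty white cell such that: (room condition) each room of size $p$ contains exactly the numbers $1,2,\dots,p$; (neighbor condition) two orthogonally adjacent white cells in different rooms contain different numbers; (arrow condition) for each black cell, the white cell its arrow points to contains the unique largest number among the (up to four) numbers in the white cells orthogonally adjacent to that black cell. Let $k$ be the size of the largest room. Cards: all cards have distinct front faces and identical backs. For each room $R$ of size $p$ there are cell cards $R_1,\dots,R_p$ (cards of different rooms are all distinct); there are helping cards $h_1,\dots,h_k$ and encoding cards $a_i,b_i,c_i,d_i$ for $i=1,\dots,2k-1$. A pile-scramble shuffle applied to a matrix of face-down cards permutes its columns by a uniformly random permutation unknown to all parties; a pile-shifting shuffle permutes the columns by a uniformly random cyclic shift unknown to all parties. Protocol. Setup: on each white cell of room $R$ containing (or, for empty cells, secretly assigned by $P$) the number $v$, $P$ places the face-down card $R_v$ (publicly for prefilled cells, secretly for the others). Room check, for each room $R$ of size $p$: put its cell cards in a fixed order in Row 1 of a $2\times p$ matrix and $h_1,\dots,h_p$ in Row 2; pile-scramble; reveal Row 1 and reject unless it is a permutation of $R_1,\dots,R_p$; turn these cards face down, pile-scramble again,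 reveal Row 2, rearrange the columns so Row 2 reads $h_1,\dots,h_p$, and return the Row 1 cards to their cells. Conversion (cell with card $R_x$ in room $R$ of size $p$, target length $m\ge p$, card set $X\in\{a,b,c,d\}$): put the cell cards of $R$ in a fixed order in Row 1 of a matrix, with $R_x$ in column $i$; $h_1,\dots,h_p$ in Row 2; $X_1$ in Row 3, column $i$; $P$ secretly forms a uniformly random permutation $S$ of $X_2,\dots,X_m$ and fills the remaining $p-1$ cells of Row 3 from left to right with the first $p-1$ cards of $S$. Pile-scramble the $3\times p$ matrix; reveal Row 1 and rearrange columns so Row 1 reads $R_1,\dots,R_p$; remove Row 3 as a sequence $T$ and append the remaining $m-p$ cards of $S$ to obtain a face-down sequence of length $m$ (the encoding sequence). Then turn Row 1 face down, pile-scramble, reveal Row 2, rearrange so it reads $h_1,\dots,h_p$, and return the cell cards to their cells. Neighbor check, for each pair of adjacent white cells in different rooms (room sizes $p,q$, $m=\max(p,q)$): convert the first cell with set $a$ and the second with set $b$, both with length $m$; place the two sequences as Rows 1 and 2 of a $2\times m$ matrix; pile-scramble; reveal Row 1; let $a_1$ be in column $i$; reveal the Row 2 card in column $i$ and reject if it is $b_1$. Arrow check, for each black cell: let the pointed-to cell and the other (up to three) adjacent white cells be considered, and let $m$ be the maximum room size among them; convert the pointed-to cell with set $a$ and the others with sets $b,c,d$, all with length $2m-1$; place them as rows of a matrix (Row 1 from set $a$); apply a pile-shifting shuffle; reveal Row 1, let $a_1$ be in column $i$; reveal the cards of the other rows in columns $i,i+1,\dots,i+m-1$ (indices modulo $2m-1$)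 and reject if any of them is $b_1$, $c_1$ or $d_1$. $V$ accepts if no check rejects. *)

From HB Require Import structures.
From mathcomp Require Import all_boot.

Set Implicit Arguments.
Unset Strict Implicit.
Unset Printing Implicit Defensive.

(* A Makaro instance on an nr x nc grid; cells are pairs (row, column).
   - white c : cell c is white (otherwise black);
   - room c  : label of the room of a white cell (rooms = classes of white
               cells with equal label);
   - given c : Some v if white cell c is prefilled with the number v;
   - arrow b : the cell the arrow of the black cell b points to.            *)
Record puzzle (nr nc : nat) := Puzzle {
  white : pred ('I_nr * 'I_nc);
  room  : 'I_nr * 'I_nc -> nat;
  given : 'I_nr * 'I_nc -> option nat;
  arrow : 'I_nr * 'I_nc -> 'I_nr * 'I_nc
}.

Definition ndist (m n : nat) : nat := (m - n) + (n - m).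

Definition adj (nr nc : nat) (x y : 'I_nr * 'I_nc) : bool :=
  ((x.1 == y.1) && (ndist x.2 y.2 == 1)) ||
  ((x.2 == y.2) && (ndist x.1 y.1 == 1)).

Inductive letter := LA | LB | LC | LD.
Definition letter_code (l : letter) : nat :=
  match l with LA => 0 | LB => 1 | LC => 2 | LD => 3 end.
Definition letter_dec (n : nat) : letter :=
  match n with 0 => LA | 1 => LB | 2 => LC | _ => LD end.
Lemma letter_codeK : cancel letter_code letter_dec. Proof. by case. Qed.
HB.instance Definition _ := Equality.copy letter (can_type letter_codeK).

(* CellC r v = cell card R_v of the room with label r;
   Help i    = helping card h_i;
   Enc l i   = encoding card l_i (l in {a,b,c,d}).                          *)
Inductive card := CellC (r v : nat) | Help (i : nat) | Enc (l : letter) (i : nat).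
Definition card_code (c : card) : nat * nat * nat :=
  match c with
  | CellC r v => (0, r, v)
  | Help i => (1, 0, i)
  | Enc l i => ((letter_code l).+2, 0, i)
  end.
Definition card_dec (t : nat * nat * nat) : card :=
  match t with
  | (0, r, v) => CellC r v
  | (1, _, i) => Help i
  | (n.+2, _, i) => Enc (letter_dec n) i
  end.
Lemma card_codeK : cancel card_code card_dec.
Proof. by case=> // l i; case: l. Qed.
HB.instance Definition _ := Equality.copy card (can_type card_codeK).

Definition dummy_card : card := Help 0.

(* A matrix of face-down cards is represented by the list of its columns,
   each column being the list of its cards from Row 1 downwards.
   [row k M] is Row k+1 of M (0-based index k). *)
Definition row (k : nat) (M : seq (seq card)) : seq card :=
  [seq nth dummy_card col k | col <- M].

Section Makaro.
Variables (nr nc : nat) (P : puzzle nr nc).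
Local Notation cell := ('I_nr * 'I_nc)%type.

Definition room_cells (r : nat) : seq cell :=
  [seq c <- enum {: cell} | white P c && (room P c == r)].
Definition room_size (r : nat) : nat := size (room_cells r).

Definition room_edge : rel cell :=
  [rel x y | [&& adj x y, white P x, white P y & room P x == room P y]].

Definition wf_puzzle : Prop :=
  [/\ (forall x y : cell, white P x -> white P y -> room P x = room P y ->
         connect room_edge x y),
      (forall b : cell, ~~ white P b -> adj b (arrow P b) && white P (arrow P b))
    & (forall (c : cell) v, given P c = Some v -> white P c)].

Definition room_condition (a : cell -> nat) : Prop :=
  forall c : cell, white P c ->
    perm_eq [seq a x | x <- room_cells (room P c)] (iota 1 (room_size (room P c))).

Definition neighbor_condition (a : cell -> nat) : Prop :=
  forall x y : cell, white P x -> white P y -> adj x y -> room P x != room P y ->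
    a x != a y.

Definition arrow_condition (a : cell -> nat) : Prop :=
  forall b : cell, ~~ white P b ->
    forall w : cell, white P w -> adj b w -> w != arrow P b ->
      a w < a (arrow P b).

(* the state of the table: the card lying (face down) on each cell *)
Definition state := cell -> card.

Definition setup (a : cell -> nat) : state := fun c => CellC (room P c) (a c).

Definition cell_cards (r p : nat) : seq card := [seq CellC r v | v <- iota 1 p].
Definition helpers (p : nat) : seq card := [seq Help i | i <- iota 1 p].

Definition return_cards (st : state) (rc : seq cell) (cs : seq card) : state :=
  fun x => if x \in rc then nth (st x) cs (index x rc) else st x.

(* Every possible outcome of a pile-scramble shuffle of the matrix M (a
   permutation of its columns) is a matrix M' with perm_eq M M'; every
   possible outcome of a pile-shifting shuffle of a matrix given by its rows
   is obtained by rotating all rows by the same amount.  Rearranging columns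
   so that a row reads a prescribed sequence is again a column permutation
   with that property.  [X_ok ... st'] means: there is an execution of the
   step X (for some outcomes of the shuffles and some choices of P) in which
   V does not reject, and which leaves the table in state st'. *)

Definition room_check (st : state) (r : nat) (st' : state) : Prop :=
  let rc := room_cells r in
  let p := size rc in
  let M := [seq [:: st xi.1; Help xi.2] | xi <- zip rc (iota 1 p)] in
  exists M1 M2 M3,
    [/\ perm_eq M M1,
        perm_eq (row 0 M1) (cell_cards r p),   (* reveal Row 1: no reject *)
        perm_eq M1 M2,
        perm_eq M2 M3 /\ row 1 M3 = helpers p  (* reveal Row 2, rearrange *)
      & st' = return_cards st rc (row 0 M3)].

Definition conversion (st : state) (x : cell) (l : letter) (m : nat)
    (E : seq card) (st' : state) : Prop :=
  let r := room P x in
  let rc := room_cells r in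
  let p := size rc in
  let i := index x rc in
  exists S : seq card,
    perm_eq S [seq Enc l j | j <- iota 2 m.-1] /\     (* P's secret S *)
    let S1 := take p.-1 S in
    let row3 := take i S1 ++ Enc l 1 :: drop i S1 in
    let M := [seq [:: st xi.1.1; Help xi.1.2; xi.2]
               | xi <- zip (zip rc (iota 1 p)) row3] in
    exists M1 M2 M3 M4,
      [/\ perm_eq M M1,
          perm_eq M1 M2 /\ row 0 M2 = cell_cards r p,    (* reveal, rearrange *)
          E = row 2 M2 ++ drop p.-1 S,
          perm_eq [seq take 2 col | col <- M2] M3
        & perm_eq M3 M4 /\ row 1 M4 = helpers p /\      (* reveal, rearrange *)
          st' = return_cards st rc (row 0 M4)].

Fixpoint conversions (st : state) (ws : seq (cell * letter)) (m : nat)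
    (Es : seq (seq card)) (st' : state) : Prop :=
  match ws with
  | [::] => Es = [::] /\ st' = st
  | (w, l) :: ws' => exists E st1 Es',
      [/\ conversion st w l m E st1, conversions st1 ws' m Es' st' & Es = E :: Es']
  end.

Definition neighbor_check (st : state) (xy : cell * cell) (st' : state) : Prop :=
  let: (x, y) := xy in
  let m := maxn (room_size (room P x)) (room_size (room P y)) in
  exists Ea Eb M1,
    [/\ conversions st [:: (x, LA); (y, LB)] m [:: Ea; Eb] st',
        perm_eq [seq [:: e.1; e.2] | e <- zip Ea Eb] M1
      & nth dummy_card (row 1 M1) (index (Enc LA 1) (row 0 M1)) != Enc LB 1].

Definition other_neighbors (b : cell) : seq cell :=
  [seq w <- enum {: cell} | [&& white P w, adj b w & w != arrow P b]].

Definition arrow_check (st : state) (b : cell) (st' : state) : Prop :=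
  let t := arrow P b in
  let os := other_neighbors b in
  let m := foldr maxn 0 [seq room_size (room P w) | w <- t :: os] in
  let L := (2 * m).-1 in
  exists Ea Es j,
    [/\ conversions st ((t, LA) :: zip os [:: LB; LC; LD]) L (Ea :: Es) st',
        j < L                                               (* pile-shifting *)
      & let i := index (Enc LA 1) (rot j Ea) in
        all (fun E => all (fun k => nth dummy_card (rot j E) ((i + k) %% L)
                                     \notin [:: Enc LB 1; Enc LC 1; Enc LD 1])
                          (iota 0 m)) Es].

Fixpoint run {A : Type} (step : state -> A -> state -> Prop) (st : state)
    (xs : seq A) (st' : state) : Prop :=
  match xs with
  | [::] => st' = st
  | x :: xs' => exists st1, step st x st1 /\ run step st1 xs' st'
  end.

Definition rooms : seq nat :=
  undup [seq room P c | c <- enum {: cell} & white P c].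

Definition neighbor_pairs : seq (cell * cell) :=
  [seq xy <- [seq (x, y) | x <- enum {: cell}, y <- enum {: cell}]
   | [&& index xy.1 (enum {: cell}) < index xy.2 (enum {: cell}),
         white P xy.1, white P xy.2, adj xy.1 xy.2 & room P xy.1 != room P xy.2]].

Definition black_cells : seq cell := [seq b <- enum {: cell} | ~~ white P b].

Definition verifier_accepts (a : cell -> nat) : Prop :=
  exists st1 st2 st3,
    [/\ run room_check (setup a) rooms st1,
        run neighbor_check st1 neighbor_pairs st2
      & run arrow_check st2 black_cells st3].

End Makaro.

From Pilot Require Import Defs.
From HB Require Import structures.
From mathcomp Require Import all_boot.
From mathcomp Require Import zify.
From Stdlib Require Import FunctionalExtensionality.

(* If V accepts, then every check returned the cell cards to their cells:
   each check ends by rearranging the columns so that the (distinct) helping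
   cards are back in order, which undoes all the shuffles.  So every check is
   run on the table produced by the setup.  On that table the room check
   reveals that a room holds a permutation of R_1, ..., R_p, and converting a
   cell holding R_v yields a sequence whose only X_1 is at position v.  In the
   neighbor check the card revealed under a_1 is then b_1 exactly when the two
   numbers are equal; in the arrow check the revealed window of m cards
   starting at a_1 contains the marked card of every other neighbour whose
   number is at least that of the pointed-to cell. *)

Set Implicit Arguments.
Unset Strict Implicit.
Unset Printing Implicit Defensive.

Lemma perm_map_uniq_eq (T U : eqType) (f : T -> U) (s t : seq T) :
  perm_eq s t -> uniq (map f s) -> map f t = map f s -> t = s.
Proof.
case: s => [|x0 s1] pst us ets; first by apply/perm_nilP; rewrite perm_sym.
move: (x0 :: s1) pst us ets => s pst us ets.
apply: (eq_from_nth (x0 := x0)) => [|i]; first by rewrite (perm_size pst).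
rewrite -(perm_size pst) => lt_i.
have t_i : nth x0 t i \in s by rewrite (perm_mem pst) mem_nth // -(perm_size pst).
have lt_j : index (nth x0 t i) s < size s by rewrite index_mem.
have : nth (f x0) (map f s) (index (nth x0 t i) s) = nth (f x0) (map f s) i.
  by rewrite (nth_map x0) // nth_index // -(nth_map x0 (f x0)) -?(perm_size pst) // ets.
move/eqP; rewrite nth_uniq ?size_map // => /eqP {2}<-.
by rewrite nth_index.
Qed.

Lemma nth_rot (T : Type) (x0 : T) (s : seq T) j q :
  j <= size s -> q < size s -> nth x0 (rot j s) q = nth x0 s ((q + j) %% size s).
Proof.
move=> le_j lt_q; rewrite /rot nth_cat size_drop; case: ltnP => h.
  by rewrite nth_drop modn_small; [congr nth; lia | lia].
rewrite nth_take; last lia.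
have -> : q + j = (q + j - size s) + size s by lia.
by rewrite modnDr modn_small; [congr nth; lia | lia].
Qed.

Lemma nth_zip_index (S : eqType) (T : Type) (s : seq S) (t : seq T) x y :
  x \in s -> size s <= size t -> nth (x, y) (zip s t) (index x s) = (x, nth y t (index x s)).
Proof.
by move=> xs le_st; rewrite nth_zip_cond size_zip (minn_idPl le_st) index_mem xs /= nth_index.
Qed.

Lemma leq_foldr_maxn (s : seq nat) x : x \in s -> x <= foldr maxn 0 s.
Proof.
elim: s => //= y s IHs; rewrite inE => /predU1P [->|/IHs]; first exact: leq_maxl.
by move/leq_trans; apply; apply: leq_maxr.
Qed.

Lemma adj_sym (nr nc : nat) (x y : 'I_nr * 'I_nc) : adj x y = adj y x.
Proof. by rewrite /adj /ndist (eq_sym x.1) (eq_sym x.2) (addnC (x.2 - _)) (addnC (x.1 - _)). Qed.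

Lemma adj_irr (nr nc : nat) (x : 'I_nr * 'I_nc) : adj x x = false.
Proof. by rewrite /adj /ndist !subnn /= !andbF. Qed.

(* Positions are 0-based: an encoding of the number v with card set X marks
   X_1 at position v.-1. *)
Definition marks (c : Defs.card) (E : seq Defs.card) (q : nat) : Prop :=
  forall k, (nth dummy_card E k == c) = (k == q).

(* Past the end, [nth] returns the same default at every index, so no mark lies there. *)
Lemma marks_size c E q : marks c E q -> q < size E.
Proof.
move=> mE; rewrite ltnNge; apply/negP => le_E.
have := mE q.+1; rewrite !nth_default ?(leq_trans le_E) // -[dummy_card](nth_default _ le_E).
by rewrite mE eqxx => /esym /eqP; lia.
Qed.

Lemma marks_nth c E q : marks c E q -> nth dummy_card E q = c.
Proof. by move=> mE; apply/eqP; rewrite mE. Qed.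

Lemma nth_notin c s j : c \notin s -> c != dummy_card -> nth dummy_card s j != c.
Proof.
move=> cNs cNd; case: (ltnP j (size s)) => [lt_j | le_j]; last by rewrite nth_default // eq_sym.
by apply: contraNneq cNs => <-; apply: mem_nth.
Qed.

Definition insert_at (T : Type) (i : nat) (x : T) (s : seq T) : seq T :=
  take i s ++ x :: drop i s.

Lemma size_insert_at (T : Type) i (x : T) s : size (insert_at i x s) = (size s).+1.
Proof. by rewrite /insert_at size_cat /= addnS -size_cat cat_take_drop. Qed.

Lemma marks_insert c s i :
  c \notin s -> c != dummy_card -> i <= size s -> marks c (insert_at i c s) i.
Proof.
move=> cNs cNd le_i k; rewrite /insert_at nth_cat size_take_min (minn_idPl le_i).
case: ltngtP => [lt_k|lt_i|->]; last by rewrite subnn eqxx.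
  by apply/negbTE; apply: contraNneq cNs => <-; rewrite nth_take // mem_nth //; lia.
rewrite -[k - i]prednK ?subn_gt0 //=.
case: (ltnP (k - i).-1 (size (drop i s))) => [lt_n|le_n].
  apply/negbTE; apply: contraNneq cNs => <-.
  by rewrite nth_drop mem_nth //; rewrite size_drop in lt_n; lia.
by rewrite nth_default // eq_sym (negbTE cNd).
Qed.

Lemma secret_cards_spec l m (S : seq Defs.card) :
  perm_eq S [seq Enc l j | j <- iota 2 m.-1] -> size S = m.-1 /\ Enc l 1 \notin S.
Proof.
move=> pS; rewrite (perm_size pS) size_map size_iota (perm_mem pS); split=> //.
by apply/mapP => -[j]; rewrite mem_iota => /andP [j_ge2 _] [j1]; rewrite -j1 in j_ge2.
Qed.

Lemma perm_row_marks M M' k c i j :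
  perm_eq M M' -> marks c (row k M) i -> j < size M' ->
  (nth dummy_card (row k M') j == c) = (nth [::] M' j == nth [::] M i).
Proof.
move=> pM mM lt_j.
have lt_i : i < size M by rewrite -(size_map (nth dummy_card ^~ k)) (marks_size mM).
rewrite /row (nth_map [::]) //; have [-> | ne] := eqVneq (nth [::] M' j) (nth [::] M i).
  by move: (marks_nth mM); rewrite /row (nth_map [::]) // => ->; rewrite eqxx.
apply: negbTE; apply: contra ne => /eqP cj.
have Mj : nth [::] M' j \in M by rewrite (perm_mem pM) mem_nth.
rewrite -(nth_index [::] Mj); apply/eqP; congr nth; apply/eqP.
by rewrite -mM /row (nth_map [::]) ?index_mem // nth_index // cj.
Qed.

Lemma uniq_row_col M k cx j :
  uniq (row k M) -> cx \in M -> j < size M ->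
  (nth [::] M j == cx) = (nth dummy_card (row k M) j == nth dummy_card cx k).
Proof.
move=> uM cM lt_j; rewrite /row (nth_map [::]) //; apply/eqP/eqP => [-> //|e].
rewrite -(nth_index [::] cM); congr nth; apply/eqP.
rewrite -(nth_uniq dummy_card _ _ uM) ?size_map ?index_mem //.
by rewrite /row !(nth_map [::]) ?index_mem // nth_index // e.
Qed.

Lemma pair_columns_reveal (Ea Eb : seq Defs.card) M c q :
  size Ea = size Eb -> perm_eq [seq [:: e.1; e.2] | e <- zip Ea Eb] M -> marks c Ea q ->
  nth dummy_card (row 1 M) (index c (row 0 M)) = nth dummy_card Eb q.
Proof.
move=> size_ab pM mEa; set Z := [seq _ | e <- _] in pM.
have size_Z : size Z = size Ea by rewrite size_map size_zip size_ab minnn.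
have row0_Z : row 0 Z = Ea.
  by rewrite /row -map_comp -[in RHS](@unzip1_zip _ _ Ea Eb) ?size_ab //; apply: eq_map => -[].
have row1_Z : row 1 Z = Eb.
  by rewrite /row -map_comp -[in RHS](@unzip2_zip _ _ Ea Eb) ?size_ab //; apply: eq_map => -[].
have mZ : marks c (row 0 Z) q by rewrite row0_Z.
have c_M : c \in row 0 M.
  rewrite -(perm_mem (perm_map (nth dummy_card ^~ 0) pM)) -/(row 0 Z) row0_Z.
  by rewrite -(marks_nth mEa) mem_nth ?(marks_size mEa).
have lt_j : index c (row 0 M) < size M by rewrite -(size_map (nth dummy_card ^~ 0)) index_mem.
have := perm_row_marks pM mZ lt_j; rewrite nth_index // eqxx => /esym/eqP col_j.
rewrite /row (nth_map [::]) // col_j -row1_Z /row (nth_map [::]) // size_Z.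
exact: marks_size mEa.
Qed.

Lemma nth_rot_window (Ea E : seq Defs.card) n c q j k :
  size Ea = n -> size E = n -> j < n -> marks c Ea q ->
  nth dummy_card (rot j E) ((index c (rot j Ea) + k) %% n) = nth dummy_card E ((q + k) %% n).
Proof.
move=> size_Ea size_E lt_j mEa; have n_gt0 : 0 < n by lia.
set i := index c (rot j Ea).
have lt_i : i < n.
  by rewrite -size_Ea -(size_rot j) index_mem mem_rot -(marks_nth mEa) mem_nth ?(marks_size mEa).
have ij_q : (i + j) %% n = q.
  apply/eqP; rewrite -mEa -size_Ea -nth_rot ?size_Ea ?(ltnW lt_j) //.
  by rewrite nth_index // mem_rot -(marks_nth mEa) mem_nth ?(marks_size mEa).
rewrite nth_rot ?size_E ?ltn_pmod ?(ltnW lt_j) //.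
by rewrite modnDml addnAC -modnDml ij_q.
Qed.

Lemma rot_window_detects (Ea E : seq Defs.card) L m X j qt qw :
  size Ea = L -> size E = L -> j < L -> m <= L -> X != LA ->
  marks (Enc LA 1) Ea qt -> marks (Enc X 1) E qw -> qt <= qw < m ->
  ~~ all (fun k => nth dummy_card (rot j E) ((index (Enc LA 1) (rot j Ea) + k) %% L)
                     \notin [:: Enc LB 1; Enc LC 1; Enc LD 1]) (iota 0 m).
Proof.
move=> size_Ea size_E lt_j le_mL XNA mEa mE /andP [le_q lt_qw].
apply/allPn; exists (qw - qt); first by rewrite mem_iota; clear -lt_qw; lia.
rewrite negbK (nth_rot_window _ size_Ea size_E lt_j mEa) subnKC //.
by rewrite modn_small ?(leq_trans lt_qw) // (marks_nth mE); case: X XNA mE.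
Qed.

Section Soundness.
Variables (nr nc : nat) (P : puzzle nr nc).
Local Notation cell := ('I_nr * 'I_nc)%type.
Implicit Types (st : state nr nc) (rc : seq cell) (M : seq (seq Defs.card)).

Definition helper_columns (st : state nr nc) (rc : seq cell) : seq (seq Defs.card) :=
  [seq [:: st xi.1; Help xi.2] | xi <- zip rc (iota 1 (size rc))].

Lemma size_helper_columns st rc : size (helper_columns st rc) = size rc.
Proof. by rewrite size_map size_zip size_iota minnn. Qed.

Lemma row0_helper_columns st rc : row 0 (helper_columns st rc) = map st rc.
Proof.
rewrite /row -map_comp -[in RHS](@unzip1_zip _ _ rc (iota 1 (size rc))) ?size_iota //.
by rewrite -map_comp; apply: eq_map => -[].
Qed.

Lemma row1_helper_columns st rc : row 1 (helper_columns st rc) = helpers (size rc).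
Proof.
rewrite /row /helpers -map_comp -[in RHS](@unzip2_zip _ _ rc (iota 1 (size rc))) ?size_iota //.
by rewrite -map_comp; apply: eq_map => -[].
Qed.

Lemma return_cards_map st rc : return_cards st rc (map st rc) = st.
Proof.
apply: functional_extensionality => x; rewrite /return_cards.
by case: ifP => // xr; rewrite (nth_map x) ?index_mem // nth_index.
Qed.

(* The helping cards are distinct, so a column permutation that puts them
   back in order is the identity. *)
Lemma return_helper_columns st rc M :
  perm_eq (helper_columns st rc) M -> row 1 M = helpers (size rc) ->
  return_cards st rc (row 0 M) = st.
Proof.
move=> pM rM; suff -> : M = helper_columns st rc by rewrite row0_helper_columns return_cards_map.
apply: (perm_map_uniq_eq (f := nth dummy_card ^~ 1) pM).
  by rewrite [map _ _]row1_helper_columns map_inj_uniq ?iota_uniq // => ? ? [].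
by rewrite [map _ M]rM [map _ _]row1_helper_columns.
Qed.

Lemma room_check_spec st r st' :
  room_check P st r st' ->
  st' = st /\ perm_eq (map st (room_cells P r)) (cell_cards r (room_size P r)).
Proof.
case=> M1 [M2 [M3 [pM1 rM1 pM2 [pM3 rM3] ->]]]; split.
  by apply: return_helper_columns rM3; rewrite (perm_trans pM1) ?(perm_trans pM2).
by rewrite -row0_helper_columns (perm_trans _ rM1) ?perm_map.
Qed.

Definition encoding_columns st rc (row3 : seq Defs.card) : seq (seq Defs.card) :=
  [seq [:: st xi.1.1; Help xi.1.2; xi.2] | xi <- zip (zip rc (iota 1 (size rc))) row3].

Lemma take2_encoding_columns st rc row3 :
  size rc <= size row3 -> map (take 2) (encoding_columns st rc row3) = helper_columns st rc.
Proof.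
move=> le_rc; rewrite /helper_columns -map_comp.
rewrite -[in RHS](@unzip1_zip _ _ (zip rc (iota 1 (size rc))) row3) ?size_zip ?size_iota ?minnn //.
by rewrite -map_comp; apply: eq_map => -[[]].
Qed.

Lemma row2_encoding_columns st rc row3 :
  size row3 <= size rc -> row 2 (encoding_columns st rc row3) = row3.
Proof.
move=> le_row3; rewrite /row -map_comp.
by rewrite -[in RHS](@unzip2_zip _ _ (zip rc (iota 1 (size rc))) row3) ?size_zip ?size_iota ?minnn.
Qed.

Lemma size_encoding_columns st rc row3 :
  size rc <= size row3 -> size (encoding_columns st rc row3) = size rc.
Proof.
by move=> le_rc; rewrite -(size_map (take 2)) take2_encoding_columns ?size_helper_columns.
Qed.

Lemma nth_encoding_columns st rc row3 x0 i :
  size row3 = size rc -> i < size rc ->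
  nth [::] (encoding_columns st rc row3) i =
    [:: st (nth x0 rc i); Help i.+1; nth dummy_card row3 i].
Proof.
move=> size_row3 lt_i; have size_Z : size (zip rc (iota 1 (size rc))) = size rc.
  by rewrite size_zip size_iota minnn.
rewrite (nth_map (x0, 0, dummy_card)); last by rewrite size_zip size_Z size_row3 minnn.
by rewrite nth_zip ?size_Z //= nth_zip ?size_iota //= nth_iota.
Qed.

Lemma rearranged_encoding_row st rc row3 M x0 r c i :
  size row3 = size rc -> marks c row3 i -> perm_eq (encoding_columns st rc row3) M ->
  row 0 M = cell_cards r (size rc) ->
  st (nth x0 rc i) \in cell_cards r (size rc) /\
  forall j, j < size rc -> (nth dummy_card (row 2 M) j == c) = (st (nth x0 rc i) == CellC r j.+1).
Proof.
move=> size_row3 m_row3 pM rM; set cx := nth [::] (encoding_columns st rc row3) i.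
have lt_i : i < size rc by rewrite -size_row3 (marks_size m_row3).
have cx_E : cx = [:: st (nth x0 rc i); Help i.+1; c].
  by rewrite /cx (nth_encoding_columns _ x0) // (marks_nth m_row3).
have size_M : size M = size rc by rewrite -(perm_size pM) size_encoding_columns ?size_row3.
have cx_M : cx \in M by rewrite -(perm_mem pM) mem_nth // size_encoding_columns ?size_row3.
have uniq_row0 : uniq (row 0 M) by rewrite rM map_inj_uniq ?iota_uniq // => ? ? [].
have st_cx : st (nth x0 rc i) = nth dummy_card cx 0 by rewrite cx_E.
split; first by rewrite -rM st_cx; apply: (map_f (nth dummy_card ^~ 0) cx_M).
move=> j lt_j; rewrite (perm_row_marks pM (i := i)) ?row2_encoding_columns ?size_row3 ?size_M //.
rewrite (uniq_row_col uniq_row0) ?size_M // rM /cell_cards (nth_map 0) ?size_iota // nth_iota //.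
by rewrite -/cx -st_cx eq_sym.
Qed.

Lemma conversion_spec st x l m E st' :
  white P x -> room_size P (room P x) <= m -> conversion P st x l m E st' ->
  st' = st /\ exists2 v, st x = CellC (room P x) v &
    [/\ 0 < v <= room_size P (room P x), size E = m & marks (Enc l 1) E v.-1].
Proof.
move=> wx le_m [S [pS [M1 [M2 [M3 [M4 [pM1 [pM2 rM2] ->{E} pM3 [pM4 [rM4 ->{st'}]]]]]]]]].
rewrite /room_size in le_m *.
set r := room P x in le_m pM1 rM2 rM4 *.
set rc := room_cells P r in le_m pM1 rM2 rM4 *.
set p := size rc in le_m pM1 rM2 rM4 *.
set i := index x rc in pM1.
set S1 := take p.-1 S in pM1 *.
have {}pM1 : perm_eq (encoding_columns st rc (insert_at i (Enc l 1) S1)) M1 := pM1.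
set row3 := insert_at i (Enc l 1) S1 in pM1.
have x_rc : x \in rc by rewrite mem_filter wx eqxx mem_enum.
have lt_i : i < p by rewrite index_mem.
have p_gt0 : 0 < p := leq_ltn_trans (leq0n i) lt_i.
have [size_S SN] := secret_cards_spec pS.
have size_S1 : size S1 = p.-1 by rewrite size_takel // size_S -!subn1 leq_sub2r.
have size_row3 : size row3 = p by rewrite /row3 size_insert_at size_S1 prednK.
have m_row3 : marks (Enc l 1) row3 i.
  apply: marks_insert => //; first by apply: contra SN; apply: mem_take.
  by rewrite size_S1 -ltnS prednK.
have pM12 := perm_trans pM1 pM2.
split.
  apply: return_helper_columns rM4.
  rewrite -(take2_encoding_columns st (row3 := row3)) ?size_row3 //.
  by apply: perm_trans (perm_trans pM3 pM4); apply: perm_map.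
have size_M2 : size M2 = p by rewrite -(perm_size pM12) size_encoding_columns ?size_row3.
have [] := rearranged_encoding_row x size_row3 m_row3 pM12 rM2; rewrite nth_index //.
case/mapP=> v; rewrite mem_iota => /andP [v_gt0 v_le] st_x row2_M2; exists v => //.
rewrite add1n ltnS in v_le; rewrite v_gt0 v_le size_cat size_map size_drop size_M2 size_S.
split=> // [|j]; first by clear -le_m p_gt0; lia.
rewrite nth_cat size_map size_M2; case: ltnP => [lt_j | le_j].
  by rewrite row2_M2 // st_x; apply/eqP/eqP => [[->] // | ->]; rewrite prednK.
have dropN : Enc l 1 \notin drop p.-1 S by apply: contra SN; apply: mem_drop.
by rewrite (negbTE (nth_notin _ dropN _)) // gtn_eqF // prednK // (leq_trans v_le).
Qed.

Lemma run_stationary (A : eqType) (step : state nr nc -> A -> state nr nc -> Prop)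
    (Q : A -> Prop) st xs st' :
  (forall x st1, x \in xs -> step st x st1 -> st1 = st /\ Q x) ->
  run step st xs st' -> st' = st /\ {in xs, forall x, Q x}.
Proof.
elim: xs => [|x xs IHxs] /= step_ok; first by move=> ->.
case=> st1 [step1]; have [-> Qx] := step_ok x st1 (mem_head _ _) step1 => run1.
have [-> Qxs] := IHxs (fun y st2 xs_y => step_ok y st2 (mem_behead (s := x :: xs) xs_y)) run1.
by split=> // y; rewrite inE => /predU1P [-> | /Qxs].
Qed.

Lemma mem_other_neighbors b w :
  (w \in other_neighbors P b) = [&& white P w, adj b w & w != arrow P b].
Proof. by rewrite mem_filter mem_enum andbT. Qed.

Lemma size_other_neighbors b : adj b (arrow P b) -> size (other_neighbors P b) <= 3.
Proof.
move=> adj_t; pose g (w : cell) := (val w.1, val w.2).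
have g_inj : injective g by move=> [? ?] [? ?] [/val_inj -> /val_inj ->].
pose cand := [:: (val b.1, (val b.2).+1); (val b.1, (val b.2).-1);
                 ((val b.1).+1, val b.2); ((val b.1).-1, val b.2)].
have cand_adj w : adj b w -> g w \in cand.
  case: w => w1 w2; rewrite /adj /ndist /= !inE !xpair_eqE -!val_eqE /=.
  by case/orP => /andP [/eqP ? /eqP ?]; lia.
have sub : {subset map g (other_neighbors P b) <= filter (predC1 (g (arrow P b))) cand}.
  move=> _ /mapP [w + ->]; rewrite mem_other_neighbors => /and3P [_ adj_w w_t].
  by rewrite mem_filter /= (inj_eq g_inj) w_t cand_adj.
have uniq_os : uniq (other_neighbors P b) by rewrite filter_uniq ?enum_uniq.
have := uniq_leq_size _ sub; rewrite map_inj_uniq // size_map => /(_ uniq_os) /leq_trans.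
apply; rewrite size_filter.
have := cand_adj _ adj_t; rewrite /cand; case: (g _) => t1 t2.
by rewrite !inE /= !xpair_eqE => h; lia.
Qed.

Lemma room_size_gt0 w : white P w -> 0 < room_size P (room P w).
Proof.
move=> wW; rewrite /room_size -has_predT; apply/hasP; exists w => //.
by rewrite mem_filter wW eqxx mem_enum.
Qed.

Lemma mem_rooms c : white P c -> room P c \in rooms P.
Proof. by move=> wc; rewrite mem_undup; apply: map_f; rewrite mem_filter wc mem_enum. Qed.

Lemma mem_black_cells b : (b \in black_cells P) = ~~ white P b.
Proof. by rewrite mem_filter mem_enum andbT. Qed.

Lemma neighbor_pairs_cover x y :
  white P x -> white P y -> adj x y -> room P x != room P y ->
  (x, y) \in neighbor_pairs P \/ (y, x) \in neighbor_pairs P.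
Proof.
move=> wx wy adj_xy room_xy; rewrite !mem_filter /= !allpairs_f ?mem_enum // !andbT.
rewrite wx wy adj_xy room_xy adj_sym adj_xy eq_sym room_xy !andbT.
case: ltngtP => [|_ /=|]; [by left | by right | move=> /(congr1 (nth x (enum {: cell})))].
by rewrite !nth_index ?mem_enum // => exy; rewrite exy adj_irr in adj_xy.
Qed.

Variable a : cell -> nat.

Definition encodes (m : nat) (wl : cell * letter) (E : seq Defs.card) : Prop :=
  [/\ a wl.1 <= room_size P (room P wl.1), size E = m & marks (Enc wl.2 1) E (a wl.1).-1].

Lemma conversions_setup ws m Es st' :
  (forall wl, wl \in ws -> white P wl.1 /\ room_size P (room P wl.1) <= m) ->
  conversions P (setup P a) ws m Es st' ->
  [/\ st' = setup P a, size Es = size ws &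
      forall d k, k < size ws -> encodes m (nth d ws k) (nth [::] Es k)].
Proof.
elim: ws Es st' => [|[w l] ws IHws] Es st' ws_ok /=; first by case=> -> ->.
case=> E [st1 [Es' [conv convs ->]]].
have [wW le_m] := ws_ok _ (mem_head _ _).
have [st1E [v st_w [/andP [_ v_le] size_E mE]]] := conversion_spec wW le_m conv; subst st1.
have av : a w = v by case: st_w.
subst v.
have [|-> size_Es' encs] := IHws Es' st' _ convs.
  by move=> wl wl_ws; apply: ws_ok; rewrite inE wl_ws orbT.
by split=> [||d [|k] lt_k] //=; [rewrite size_Es' | apply: encs].
Qed.

Lemma room_check_setup r st' :
  room_check P (setup P a) r st' ->
  st' = setup P a /\ perm_eq (map a (room_cells P r)) (iota 1 (room_size P r)).
Proof.
case/room_check_spec=> -> perm_rc; split=> //.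
apply: (@perm_map_inj _ _ (CellC r)); first by move=> ? ? [].
rewrite -map_comp; congr perm_eq: perm_rc; apply/eq_in_map => x.
by rewrite mem_filter /setup => /andP [/andP [_ /eqP ->]].
Qed.

Lemma neighbor_check_setup xy st' :
  xy \in neighbor_pairs P -> neighbor_check P (setup P a) xy st' ->
  st' = setup P a /\ a xy.1 != a xy.2.
Proof.
case: xy => x y; rewrite mem_filter => /andP [/and5P [_ wx wy _ _] _].
case=> Ea [Eb [M [convs pM reveal]]].
have [|-> _ encs] := conversions_setup _ convs.
  by move=> wl; rewrite !inE => /orP [] /eqP -> /=; rewrite ?leq_maxl ?leq_maxr.
split=> //; have [_ size_Ea mEa] := encs (x, LA) 0 isT.
have [_ size_Eb mEb] := encs (x, LA) 1 isT.
apply: contra reveal => /eqP axy.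
by rewrite (pair_columns_reveal _ pM mEa) ?size_Ea ?size_Eb // axy (marks_nth mEb).
Qed.

Hypothesis arrow_wf : forall b, ~~ white P b -> adj b (arrow P b) && white P (arrow P b).

Lemma arrow_check_setup b st' :
  b \in black_cells P -> arrow_check P (setup P a) b st' ->
  st' = setup P a /\
  forall w, white P w -> adj b w -> w != arrow P b -> a w < a (arrow P b).
Proof.
rewrite mem_black_cells => /arrow_wf /andP [adj_t wt] [Ea [Es [j [convs lt_j window]]]].
have size_os := size_other_neighbors adj_t.
set t := arrow P b in adj_t wt convs window size_os *.
set os := other_neighbors P b in convs window size_os *.
set m := foldr maxn 0 _ in convs lt_j window.
have le_m w : w \in t :: os -> room_size P (room P w) <= m.
  by move=> w_os; apply: leq_foldr_maxn; apply/mapP; exists w.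
have m_gt0 : 0 < m by apply: leq_trans (room_size_gt0 wt) (le_m _ (mem_head _ _)).
set L := (2 * m).-1 in convs lt_j window.
have le_mL : m <= L by clear -m_gt0; lia.
have [|-> size_Es encs] := conversions_setup _ convs.
  move=> [w l]; rewrite inE => /predU1P [[-> _] | /(map_f fst)].
    by rewrite (leq_trans (le_m _ _)) ?mem_head.
  rewrite -[map _ _]/(unzip1 _) unzip1_zip ?size_os //= => w_os.
  move: (w_os); rewrite mem_other_neighbors => /and3P [ww _ _].
  by rewrite ww (leq_trans (le_m w _)) // inE w_os orbT.
split=> // w ww adj_w w_t.
have w_os : w \in os by rewrite mem_other_neighbors ww adj_w w_t.
have lt_k : index w os < size os by rewrite index_mem.
have [_ size_Ea mEa] : encodes L (t, LA) Ea := encs (t, LA) 0 isT.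
have size_zip_os : size (zip os [:: LB; LC; LD]) = size os.
  by rewrite size_zip /=; clear -size_os; lia.
set k := index w os in lt_k *.
set X := nth LA [:: LB; LC; LD] k.
have X_bcd : X \in [:: LB; LC; LD] by rewrite mem_nth // (leq_trans lt_k).
have [aw_le size_E mE] : encodes L (w, X) (nth [::] Es k).
  have := encs (w, LA) k.+1; cbn [nth size]; rewrite ltnS size_zip_os.
  by rewrite /k nth_zip_index ?size_os //; apply.
rewrite /= in mEa aw_le mE.
have E_in : nth [::] Es k \in Es.
  by case: size_Es => size_Es; rewrite mem_nth // size_Es size_zip_os.
have lt_aw : (a w).-1 < m.
  have := le_m w; rewrite inE w_os orbT => /(_ isT) le_w; clear -aw_le le_w m_gt0; lia.
have XNA : X != LA by apply: contraTneq X_bcd => ->.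
rewrite ltnNge; apply: contraL (allP window _ E_in) => le_at_aw.
apply: rot_window_detects size_Ea size_E lt_j le_mL XNA mEa mE _.
by rewrite lt_aw andbT -!subn1 leq_sub2r.
Qed.

End Soundness.

Theorem lemma2 (nr nc : nat) (P : puzzle nr nc) (HP : wf_puzzle P)
    (a : 'I_nr * 'I_nc -> nat)
    (Hgiven : forall c v, given P c = Some v -> a c = v)
    (Hbad : ~ [/\ room_condition P a, neighbor_condition P a & arrow_condition P a]) :
  ~ verifier_accepts P a.
Proof.
case: HP => _ arrow_wf _; case=> st1 [st2 [st3 [run_rooms run_pairs run_arrows]]].
apply: Hbad.
have [e1 rooms_ok] := run_stationary (fun r st _ => @room_check_setup _ _ P a r st) run_rooms.
subst st1.
have [e2 pairs_ok] := run_stationary (@neighbor_check_setup _ _ P a) run_pairs.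
subst st2.
have [_ arrows_ok] := run_stationary (arrow_check_setup arrow_wf) run_arrows.
split.
- by move=> c wc; apply: rooms_ok; apply: mem_rooms.
- move=> x y wx wy adj_xy room_xy.
  by case: (neighbor_pairs_cover wx wy adj_xy room_xy) => /pairs_ok //; rewrite eq_sym.
- by move=> b black_b; apply: arrows_ok; rewrite mem_black_cells.
Qed.
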